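(* Let $G=(V,E)$ be a graph and suppose there is a graphical instance $(f_v)_{v\in V}$ on $G$ for which $G$ has no EFX orientation, and an edge $e=uv\in E$ that has zero value for both of its endpoints $u$ and $v$. Let $G'$ be obtained from $G$ by replacing the edge $e$ with a path of any odd length from $u$ to $v$ whose internal vertices are new. Then $G'$ is not strongly EFX-orientable.
   Context: All graphs are finite and simple. For a graph $G=(V,E)$ and $v\in V$, $E(v)$ is the set of edges incident to $v$. A graphical instance on $G$ assigns to each vertex $v$ a valuation $f_v:2^E\to\mathbb{R}_{\ge 0}$ that is monotone ($A\subseteq B\Rightarrow f_v(A)\le f_v(B)$) and satisfies $f_v(X)=f_v(X\cap E(v))$ for all $X\subseteq E$. An item (edge) $m$ has zero value to agent (vertex) $i$ if $f_i(X\setminus\{m\})=f_i(X)$ for all $X\subseteq E$. An orientation of $G$ chooses for each edge one of its endpoints as its head; vertex $v$ receives the bundle $X_v$ of edges whose head is $v$. The orientation is EFX if for all $u,v\in V$ and every $g\in X_v$, $f_u(X_u)\ge f_u(X_v\setminus\{g\})$. A graph $G$ is strongly EFX-orientable if for every graphical instance on $G$ there exists an EFX orientation. *)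

From mathcomp Require Import all_boot all_order all_algebra.
Set Implicit Arguments. Unset Strict Implicit. Unset Printing Implicit Defensive.
Import Order.TTheory GRing.Theory Num.Theory.
Local Open Scope ring_scope.

Section Graphs.
Variable V : finType.

Definition simple_graph (adj : rel V) : Prop :=
  (forall x y, adj x y = adj y x) /\ (forall x, ~~ adj x x).

Definition edgeset (adj : rel V) : {set {set V}} :=
  [set e : {set V} | [exists x, exists y, adj x y && (e == [set x; y])]].

Definition incident (adj : rel V) (v : V) : {set {set V}} :=
  [set e in edgeset adj | v \in e].

Variable R : realFieldType.

Definition graphical_instance (adj : rel V) (f : V -> {set {set V}} -> R) : Prop :=
  forall v : V,
    (forall X : {set {set V}}, X \subset edgeset adj -> 0 <= f v X) /\
    (forall A B : {set {set V}}, A \subset B -> B \subset edgeset adj -> f v A <= f v B) /\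
    (forall X : {set {set V}}, X \subset edgeset adj -> f v X = f v (X :&: incident adj v)).

Definition zero_value (adj : rel V) (f : V -> {set {set V}} -> R) (i : V) (m : {set V}) : Prop :=
  forall X : {set {set V}}, X \subset edgeset adj -> f i (X :\ m) = f i X.

Definition orientation (adj : rel V) (head : {set V} -> V) : Prop :=
  forall e, e \in edgeset adj -> head e \in e.

Definition bundle (adj : rel V) (head : {set V} -> V) (v : V) : {set {set V}} :=
  [set e in edgeset adj | head e == v].

Definition EFX_orientation (adj : rel V) (f : V -> {set {set V}} -> R)
  (head : {set V} -> V) : Prop :=
  orientation adj head /\
  forall u v : V, forall g : {set V}, g \in bundle adj head v ->
    f u (bundle adj head v :\ g) <= f u (bundle adj head u).

Definition has_EFX_orientation (adj : rel V) (f : V -> {set {set V}} -> R) : Prop :=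
  exists head, EFX_orientation adj f head.

Definition strongly_EFX_orientable (adj : rel V) : Prop :=
  forall f : V -> {set {set V}} -> R, graphical_instance adj f -> has_EFX_orientation adj f.

End Graphs.

(* G' : replace edge uv by a path u - i_0 - ... - i_(2k-1) - v of odd length 2k+1,
   with 2k new internal vertices (for k = 0 the graph is unchanged). *)
Definition subdiv (V : finType) (adj : rel V) (u v : V) (k : nat)
  : rel (V + 'I_(k.*2))%type :=
  fun a b =>
    match a, b with
    | inl x, inl y => adj x y && ((k == 0)%N || ([set x; y] != [set u; v]))
    | inl x, inr i => ((x == u) && (val i == 0)%N) || ((x == v) && (val i == k.*2.-1)%N)
    | inr i, inl x => ((x == u) && (val i == 0)%N) || ((x == v) && (val i == k.*2.-1)%N)
    | inr i, inr j => ((val i).+1 == val j) || ((val j).+1 == val i)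
    end.
Arguments subdiv {V} adj u v k.

From mathcomp Require Import all_boot all_order all_algebra.
From mathcomp Require Import zify.
Set Implicit Arguments. Unset Strict Implicit. Unset Printing Implicit Defensive.
Import Order.TTheory GRing.Theory Num.Theory.
Local Open Scope ring_scope.

(* Write the new path as u = p_0, p_1, ..., p_(n+1) = v and pair its inner vertices as
   (p_1, p_2), (p_3, p_4), ...  In the instance on G' every inner vertex values only the
   path edge joining it to its partner, and an old vertex values a bundle through its old
   edges other than uv.  In an EFX orientation of G' a vertex that receives a pair edge
   receives nothing else, since the partner would envy it; so if p_0 p_1 points to p_1, all
   path edges point forward and p_n p_(n+1) points to v.  Either way an endpoint of uv holds a
   path edge that is worthless to every old vertex.  Giving uv, itself worthless to everyone,
   to that endpoint and orienting the other edges as in G' is an EFX orientation of G. *)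

Section Orientations.
Variables (R : realFieldType) (T : finType) (adj : rel T).

Lemma edgeset_set2 x y : adj x y -> [set x; y] \in edgeset adj.
Proof.
by move=> axy; rewrite inE; apply/existsP; exists x; apply/existsP; exists y; rewrite axy eqxx.
Qed.

Lemma mem_bundle head w e :
  (e \in bundle adj head w) = (e \in edgeset adj) && (head e == w).
Proof. by rewrite inE. Qed.

Lemma mem_incident w e : (e \in incident adj w) = (e \in edgeset adj) && (w \in e).
Proof. by rewrite inE. Qed.

Lemma bundle_sub head w : bundle adj head w \subset edgeset adj.
Proof. by apply/subsetP => e; rewrite mem_bundle => /andP[]. Qed.

Lemma zero_value_nonincident (f : T -> {set {set T}} -> R) x (e : {set T}) :
  graphical_instance adj f -> x \notin e -> zero_value adj f x e.
Proof.
move=> /(_ x) [_ [_ f_local]] xNe X XE.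
rewrite f_local ?(subset_trans (subD1set _ _)) // [RHS]f_local //; congr (f x _).
by apply/setP => g; rewrite !inE; case: eqP => // ->; rewrite (negbTE xNe) !andbF.
Qed.

Lemma EFX_single_minded (f : T -> {set {set T}} -> R) head q s g :
  EFX_orientation adj f head -> (forall X, f q X = (s \in X)%:R) ->
  s \in edgeset adj -> head s != q -> g \in bundle adj head (head s) -> g = s.
Proof.
move=> [_ efx] fq sE hsq gB; apply/eqP; apply: contraTT (efx q _ _ gB) => gs.
by rewrite !fq in_setD1 !mem_bundle eq_sym gs sE (negbTE hsq) eqxx ler10.
Qed.

End Orientations.

Section Subdivision.
Variables (R : realFieldType) (V : finType) (adj : rel V)
  (f : V -> {set {set V}} -> R) (u v : V) (k : nat).

Local Notation n := k.*2.
Local Notation W := (V + 'I_k.*2)%type.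
Local Notation adj' := (subdiv adj u v k).
Local Notation uv := [set u; v].
Local Notation lift := (@inl V 'I_k.*2).

Hypothesis graphical_f : graphical_instance adj f.
Hypothesis adj_uv : adj u v.
Hypotheses (zero_u : zero_value adj f u uv) (zero_v : zero_value adj f v uv).

(* [path_vertex j] is p_j, with n = 2k inner vertices; indices past n + 1 also give v. *)
Definition path_vertex (j : nat) : W :=
  if j is j'.+1 then if insub j' is Some i then inr i else inl v else inl u.

Definition path_edge (j : nat) : {set W} := [set path_vertex j; path_vertex j.+1].

Definition path_index (w : W) : nat := if w is inr i then (val i).+1 else 0.

Lemma path_vertexS_lt j (lt_jn : (j < n)%N) : path_vertex j.+1 = inr (Ordinal lt_jn).
Proof. by rewrite /= insubT. Qed.

Lemma path_vertexS_ge j : (n <= j)%N -> path_vertex j.+1 = inl v.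
Proof. by move=> le_nj; rewrite /= insubF // ltnNge le_nj. Qed.

Lemma path_vertex_ord (i : 'I_n) : path_vertex i.+1 = inr i.
Proof. by rewrite path_vertexS_lt; congr inr; apply: val_inj. Qed.

Lemma path_index_vertex j : path_index (path_vertex j) = if (j <= n)%N then j else 0%N.
Proof.
case: j => [|j] //; case: (ltnP j n) => lt_jn.
  by rewrite path_vertexS_lt.
by rewrite path_vertexS_ge.
Qed.

Lemma path_vertex_adj j : (j <= n)%N -> adj' (path_vertex j) (path_vertex j.+1).
Proof.
case: j => [|j] le_jn.
  case: (posnP n) => [n0|n_gt0]; last by rewrite (path_vertexS_lt n_gt0) /= !eqxx.
  by rewrite path_vertexS_ge ?n0 //= adj_uv -double_eq0 n0.
rewrite (path_vertexS_lt le_jn); case: (ltnP j.+1 n) => [lt_j1n|le_nj1].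
  by rewrite (path_vertexS_lt lt_j1n) /= eqxx.
by rewrite path_vertexS_ge //= eqxx orbC; apply/eqP; lia.
Qed.

Lemma path_edge_edge j : (j <= n)%N -> path_edge j \in edgeset adj'.
Proof. by move=> le_jn; apply/edgeset_set2/path_vertex_adj. Qed.

Lemma path_edge_pred_neq j : (0 < j)%N -> (j <= n)%N -> path_edge j.-1 != path_edge j.
Proof.
move=> j_gt0 le_jn; apply/eqP => eq_edges.
have : path_vertex j.+1 \in path_edge j.-1 by rewrite eq_edges !inE eqxx orbT.
have n_ne1 : n != 1%N by case: k => [|[]].
by rewrite !inE => /orP[] /eqP/(congr1 path_index); rewrite !path_index_vertex;
  do 2 case: ifP; lia.
Qed.

(* The inner vertex [inr i] = p_(i+1) is paired with its neighbour across the edge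
   [path_edge (pair_index i)]: the pairs are (p_1, p_2), (p_3, p_4), ..., (p_(n-1), p_n). *)
Definition pair_index (i : 'I_n) : nat := if odd i then val i else (val i).+1.

Definition old_edges (X : {set {set W}}) : {set {set V}} :=
  [set e in edgeset adj | (e != uv) && (lift @: e \in X)].

Definition subdiv_valuation (w : W) (X : {set {set W}}) : R :=
  match w with
  | inl x => f x (old_edges X)
  | inr i => (path_edge (pair_index i) \in X)%:R
  end.

Local Notation f' := subdiv_valuation.

Lemma mem_old_edges (X : {set {set W}}) e :
  (e \in old_edges X) = [&& e \in edgeset adj, e != uv & lift @: e \in X].
Proof. by rewrite inE. Qed.

Lemma lift_edge_subdiv e : e \in edgeset adj -> e != uv -> lift @: e \in edgeset adj'.
Proof.
rewrite inE => /existsP[x /existsP[y /andP[adj_xy /eqP->]]] e_neq_uv.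
by rewrite imsetU1 imset_set1; apply: edgeset_set2; rewrite /= adj_xy e_neq_uv orbT.
Qed.

Lemma old_edges_sub (X : {set {set W}}) : old_edges X \subset edgeset adj.
Proof. by apply/subsetP => e; rewrite mem_old_edges => /andP[]. Qed.

Lemma old_edgesS (X Y : {set {set W}}) : X \subset Y -> old_edges X \subset old_edges Y.
Proof.
by move=> /subsetP sXY; apply/subsetP => e; rewrite !mem_old_edges => /and3P[-> -> /sXY].
Qed.

Lemma old_edges_incident (X : {set {set W}}) x :
  old_edges (X :&: incident adj' (inl x)) :&: incident adj x =
  old_edges X :&: incident adj x.
Proof.
apply/setP => e; rewrite !in_setI !mem_old_edges in_setI !mem_incident.
case: (boolP (e \in edgeset adj)) => //= eE; case: (boolP (e != uv)) => //= e_neq_uv.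
rewrite lift_edge_subdiv // mem_imset; last exact: inl_inj.
by rewrite /= -andbA andbb.
Qed.

Lemma old_edges_setD1_lift (X : {set {set W}}) (g : {set V}) :
  old_edges (X :\ lift @: g) = old_edges X :\ g.
Proof.
apply/setP => e; rewrite in_setD1 !mem_old_edges in_setD1.
rewrite (inj_eq (imset_inj (@inl_inj _ _))).
by case: (e != g); rewrite ?andbF ?andbT.
Qed.

Lemma lift_eq_path_edge (e : {set V}) j : (j <= n)%N -> lift @: e = path_edge j -> e = uv.
Proof.
move=> le_jn e_path.
have index0 w : w \in path_edge j -> path_index w = 0%N.
  by rewrite -e_path => /imsetP[x _ ->].
have /index0 : path_vertex j \in path_edge j by rewrite !inE eqxx.
have /index0 : path_vertex j.+1 \in path_edge j by rewrite !inE eqxx orbT.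
rewrite !path_index_vertex le_jn; case: ifP => // /negbT; rewrite -ltnNge ltnS => le_nj _ j0.
apply: (imset_inj (@inl_inj V 'I_n)).
by rewrite e_path imsetU1 imset_set1 /path_edge j0 path_vertexS_ge // -j0.
Qed.

Lemma old_edges_setD1_path (X : {set {set W}}) j : (j <= n)%N ->
  old_edges (X :\ path_edge j) = old_edges X.
Proof.
move=> le_jn; apply/setP => e; rewrite !mem_old_edges in_setD1.
case: (boolP (e != uv)) => e_neq_uv; rewrite ?andbF //=.
by case: eqP => // /(lift_eq_path_edge le_jn) e_uv; rewrite e_uv eqxx in e_neq_uv.
Qed.

Lemma inner_vertex_pair_edge (i : 'I_n) : inr i \in path_edge (pair_index i).
Proof.
by rewrite /pair_index /path_edge; case: (odd i); rewrite !inE path_vertex_ord eqxx ?orbT.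
Qed.

Lemma uv_zero_value a : zero_value adj f a uv.
Proof.
have [|a_notin] := boolP (a \in uv); last exact: zero_value_nonincident.
by rewrite !inE => /orP[]/eqP->.
Qed.

Lemma subdiv_valuation_pair j w X : odd j -> (j < n)%N -> w \in path_edge j ->
  f' w X = (path_edge j \in X)%:R.
Proof.
case: j => [|j] //= /negbTE odd_j lt_j1n; have lt_jn := ltnW lt_j1n.
rewrite !inE (path_vertexS_lt lt_jn) (path_vertexS_lt lt_j1n).
by case/orP => /eqP-> /=; rewrite /pair_index /= ?odd_j.
Qed.

Lemma subdiv_valuation_graphical : graphical_instance adj' f'.
Proof.
case=> [x|i] /=.
  have [f_ge0 [f_mono f_local]] := graphical_f x.
  do ![split] => [X _ | A B sAB _ | X _] /=.
  - exact/f_ge0/old_edges_sub.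
  - exact/f_mono/old_edges_sub/old_edgesS.
  - by rewrite f_local ?old_edges_sub // -old_edges_incident -f_local ?old_edges_sub.
do ![split] => [X _ | A B /subsetP sAB _ | X /subsetP sXE] /=; first exact: ler0n.
  by rewrite ler_nat; case: (_ \in A) (@sAB (path_edge (pair_index i))) => // ->.
rewrite in_setI mem_incident inner_vertex_pair_edge andbT.
by case: (boolP (_ \in X)) => // /sXE ->.
Qed.

Section SubdivOrientation.
Variable head : {set W} -> W.
Hypothesis efx_head : EFX_orientation adj' f' head.

Lemma head_path_edge j : (j <= n)%N ->
  head (path_edge j) = path_vertex j \/ head (path_edge j) = path_vertex j.+1.
Proof.
move=> le_jn; have := efx_head.1 _ (path_edge_edge le_jn).
by rewrite !inE => /orP[]/eqP; [left | right].
Qed.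

(* For odd j both ends of p_j p_(j+1) value exactly that edge, and only one of them gets it. *)
Lemma pair_edge_alone j g : odd j -> (j < n)%N ->
  g \in bundle adj' head (head (path_edge j)) -> g = path_edge j.
Proof.
move=> odd_j lt_jn gB.
have single q : q \in path_edge j -> head (path_edge j) != q -> g = path_edge j.
  move=> q_j hq; apply: (EFX_single_minded efx_head _ _ hq gB).
    by move=> X; apply: subdiv_valuation_pair.
  exact/path_edge_edge/ltnW.
have ends_neq : path_vertex j != path_vertex j.+1.
  by apply/eqP => /(congr1 path_index); rewrite !path_index_vertex (ltnW lt_jn) lt_jn; lia.
have [hj|hj1] := head_path_edge (ltnW lt_jn).
  by apply: (single (path_vertex j.+1)); rewrite ?hj // !inE eqxx orbT.
by apply: (single (path_vertex j)); rewrite ?hj1 1?eq_sym // !inE eqxx.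
Qed.

Lemma path_orient_forward j : (0 < j)%N -> (j <= n)%N ->
  head (path_edge j.-1) = path_vertex j -> head (path_edge j) = path_vertex j.+1.
Proof.
move=> j_gt0 le_jn h_pred; have [h_j|//] := head_path_edge le_jn.
have pred_in : path_edge j.-1 \in bundle adj' head (path_vertex j).
  by rewrite mem_bundle path_edge_edge ?h_pred ?eqxx //; lia.
have j_in : path_edge j \in bundle adj' head (path_vertex j).
  by rewrite mem_bundle path_edge_edge ?h_j ?eqxx.
have := path_edge_pred_neq j_gt0 le_jn; case: (boolP (odd j)) => odd_j.
  have lt_jn : (j < n)%N.
    by rewrite ltn_neqAle le_jn andbT; apply: contraTneq odd_j => ->; rewrite odd_double.
  by rewrite (@pair_edge_alone j (path_edge j.-1)) ?eqxx ?h_j.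
have odd_pj : odd j.-1 by move: odd_j; rewrite -(prednK j_gt0) /= negbK.
have lt_pj : (j.-1 < n)%N by lia.
by rewrite -(@pair_edge_alone j.-1 (path_edge j)) ?eqxx ?h_pred // prednK.
Qed.

Lemma path_orient_end :
  head (path_edge 0) = path_vertex 0 \/ head (path_edge n) = path_vertex n.+1.
Proof.
have [|h0] := head_path_edge (leq0n n); [by left | right].
suff forward j : (j <= n)%N -> head (path_edge j) = path_vertex j.+1 by apply: forward.
by elim: j => [//| j IH] lt_jn; apply: path_orient_forward => //; apply/IH/ltnW.
Qed.

Lemma endpoint_holds_path_edge : exists b g, [/\ b \in uv,
  g \in bundle adj' head (inl b) & forall X, old_edges (X :\ g) = old_edges X].
Proof.
have [h0|hn] := path_orient_end.
  exists u, (path_edge 0); split; first by rewrite !inE eqxx.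
  - by rewrite mem_bundle path_edge_edge // h0 eqxx.
  - by move=> X; apply: old_edges_setD1_path.
exists v, (path_edge n); split; first by rewrite !inE eqxx orbT.
- by rewrite mem_bundle path_edge_edge // hn path_vertexS_ge // eqxx.
- by move=> X; apply: old_edges_setD1_path.
Qed.

Section InducedOrientation.
Variables (b : V) (g0 : {set W}).
Hypotheses (b_uv : b \in uv) (g0_b : g0 \in bundle adj' head (inl b)).
Hypothesis old_edges_g0 : forall X, old_edges (X :\ g0) = old_edges X.

Definition induced_head (e : {set V}) : V :=
  if e == uv then b else if head (lift @: e) is inl x then x else b.

Lemma induced_head_lift e : e \in edgeset adj -> e != uv ->
  head (lift @: e) = inl (induced_head e).
Proof.
move=> eE e_neq_uv; rewrite /induced_head (negbTE e_neq_uv).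
by have /imsetP[x _ ->] := efx_head.1 _ (lift_edge_subdiv eE e_neq_uv).
Qed.

Lemma mem_bundle_induced c e : (e \in bundle adj induced_head c) =
  ((e == uv) && (b == c)) || (e \in old_edges (bundle adj' head (inl c))).
Proof.
rewrite mem_bundle mem_old_edges mem_bundle.
case: (e =P uv) => [->|/eqP e_neq_uv] /=.
  by rewrite /induced_head eqxx edgeset_set2 // andbF orbF.
case: (boolP (e \in edgeset adj)) => //= eE.
by rewrite lift_edge_subdiv // induced_head_lift.
Qed.

Lemma bundle_induced_setD1 c :
  bundle adj induced_head c :\ uv = old_edges (bundle adj' head (inl c)).
Proof.
apply/setP => e; rewrite in_setD1 mem_bundle_induced.
by case: (e =P uv) => [->|] //=; rewrite mem_old_edges eqxx andbF.
Qed.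

Lemma induced_EFX : EFX_orientation adj f induced_head.
Proof.
split=> [e eE | a c g gB].
  case: (e =P uv) => [->|/eqP e_neq_uv]; first by rewrite /induced_head eqxx.
  rewrite -(mem_imset _ _ (@inl_inj V 'I_n)) -induced_head_lift //.
  exact: efx_head.1 _ (lift_edge_subdiv eE e_neq_uv).
have sub_E := subset_trans (subD1set _ g) (bundle_sub adj induced_head c).
rewrite -(uv_zero_value a sub_E) -(uv_zero_value a (bundle_sub _ _ _)).
rewrite bundle_induced_setD1.
case: (g =P uv) => [g_uv|/eqP g_neq_uv].
  have <- : b = c.
    by move: gB; rewrite mem_bundle_induced g_uv eqxx mem_old_edges eqxx andbF orbF => /eqP.
  rewrite g_uv setDDl setUid bundle_induced_setD1 -old_edges_g0.
  exact: efx_head.2 (inl a) (inl b) g0 g0_b.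
move: gB; rewrite mem_bundle_induced (negbTE g_neq_uv) mem_old_edges => /and3P[_ _ g_c].
rewrite setDDl setUC -setDDl bundle_induced_setD1 -old_edges_setD1_lift.
exact: efx_head.2 (inl a) (inl c) _ g_c.
Qed.

End InducedOrientation.

End SubdivOrientation.
End Subdivision.

Theorem mainTheorem12 (R : realFieldType) (V : finType) (adj : rel V)
  (f : V -> {set {set V}} -> R) (u v : V) :
  simple_graph adj ->
  graphical_instance adj f ->
  ~ has_EFX_orientation adj f ->
  adj u v ->
  zero_value adj f u [set u; v] ->
  zero_value adj f v [set u; v] ->
  forall k : nat, ~ strongly_EFX_orientable R (subdiv adj u v k).
Proof.
move=> _ graphical_f no_EFX adj_uv zero_u zero_v k strongly_EFX.
have [head efx_head] :=
  strongly_EFX _ (subdiv_valuation_graphical u v (k := k) graphical_f).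
have [b [g0 [b_uv g0_b old_edges_g0]]] := endpoint_holds_path_edge adj_uv efx_head.
apply: no_EFX; exists (induced_head u v head b).
exact (induced_EFX graphical_f adj_uv zero_u zero_v efx_head b_uv g0_b old_edges_g0).
Qed.
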